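(* Let $T$ be a finite rooted tree, and let $\mathcal{H}(T)$ be the hypergraph on $V(T)$ whose hyperedges are, for each leaf $\ell$, the set of ancestors of $\ell$ (including $\ell$ itself). Then $\mathcal{H}(T)$ can be realized with the family $\mathcal{R}_{\rm SW}$ of all south-west quadrants: there is an injective map $\pi\colon V(T) \to \mathbb{R}^2$ such that for every leaf $\ell$ there is a south-west quadrant $Q$ with $\pi(V(T)) \cap Q$ equal to the image of the set of ancestors of $\ell$ (including $\ell$). Moreover, this can be done so that the root is the bottommost and leftmost point, and the children of each non-leaf vertex lie on a common line of slope $-1$.
   Context: South-west quadrants: $\mathcal{R}_{\rm SW} = \{\{(x,y) \in \mathbb{R}^2 : x \leq a,\ y \leq b\} : a,b \in \mathbb{R}\}$. *)

From mathcomp Require Import all_boot.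
From Stdlib Require Import Reals.
Set Implicit Arguments. Unset Strict Implicit.

Definition rooted_tree (T : finType) (r : T) (p : T -> T) : Prop :=
  p r = r /\ forall v : T, exists k : nat, iter k p v = r.

Definition ancestor (T : finType) (p : T -> T) (u v : T) : Prop :=
  exists k : nat, iter k p v = u.

Definition child (T : finType) (r : T) (p : T -> T) (u v : T) : Prop :=
  u <> r /\ p u = v.

Definition leaf (T : finType) (r : T) (p : T -> T) (v : T) : Prop :=
  forall u : T, ~ child r p u v.

Definition SW_quadrant (a b : R) : (R * R) -> Prop :=
  fun q => (q.1 <= a)%R /\ (q.2 <= b)%R.

From mathcomp Require Import all_boot.
From Stdlib Require Import Reals Lra.

(* Give each vertex v of depth d the weights t^d * a(v) and t^d * b(v), where
   a(v) = rank v + 1 and b(v) = N - rank v for a numbering of the N vertices,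
   and t = 1/(N+1); the position of v is the sum of these weights along its
   path to the root.  Since (weight + 1) * t <= 1, the whole subtree below v
   stays within t^d of v in each coordinate, so the subtrees of two siblings
   are ordered north-west/south-east according to their ranks: a quadrant with
   corner at v then contains exactly the ancestors of v.  Children of v all
   have depth d + 1 and a(u) + b(u) = N + 1, so they lie on the line
   x + y = x(v) + y(v) + (N + 1) t^(d+1). *)

Section RootedTree.

Variables (T : finType) (r : T) (p : T -> T).
Hypothesis parent_root : p r = r.
Hypothesis reach_root : forall v, exists k, iter k p v = r.

Lemma iter_root k : iter k p r = r.
Proof. by elim: k => //= k ->. Qed.

Lemma reach_rootb v : exists k, iter k p v == r.
Proof. by have [k /eqP] := reach_root v; exists k. Qed.

Definition depth v : nat := ex_minn (reach_rootb v).

Lemma iter_depth v : iter (depth v) p v = r.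
Proof. by rewrite /depth; case: ex_minnP => m /eqP. Qed.

Lemma depth_min v k : iter k p v = r -> depth v <= k.
Proof. by move=> /eqP hk; rewrite /depth; case: ex_minnP => m _; apply. Qed.

Lemma depth_root : depth r = 0.
Proof. by apply/eqP; rewrite -leqn0; apply: depth_min. Qed.

Lemma depth_eq0 {v} : depth v = 0 -> v = r.
Proof. by move=> dv; rewrite -(iter_depth v) dv. Qed.

Lemma depth_parent {v} : v <> r -> depth v = (depth (p v)).+1.
Proof.
move=> vr; apply/eqP; rewrite eqn_leq; apply/andP; split.
  by apply: depth_min; rewrite iterSr iter_depth.
case def_d: (depth v) => [|d]; first by case: vr; apply: depth_eq0.
by rewrite ltnS; apply: depth_min; rewrite -iterSr -def_d iter_depth.
Qed.

Lemma depth_iter v k : depth (iter k p v) = depth v - k.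
Proof.
elim: k => [|k IHk]; first by rewrite subn0.
rewrite iterS subnS -IHk; have [->|/eqP vr] := eqVneq (iter k p v) r.
  by rewrite parent_root depth_root.
by rewrite (depth_parent vr).
Qed.

Lemma ancestor_refl v : ancestor p v v.
Proof. by exists 0. Qed.

Lemma ancestor_parent v : ancestor p (p v) v.
Proof. by exists 1. Qed.

Lemma ancestor_trans a b c : ancestor p a b -> ancestor p b c -> ancestor p a c.
Proof. by move=> [k <-] [l <-]; exists (k + l); rewrite iterD. Qed.

Definition siblings u v := [/\ u <> v, u <> r, v <> r & p u = p v].

Definition diverge u v :=
  exists u' v', [/\ siblings u' v', ancestor p u' u & ancestor p v' v].

Lemma siblings_sym {u v} : siblings u v -> siblings v u.
Proof. by move=> [uv ur vr puv]; split=> //; apply: nesym. Qed.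

Lemma diverge_sym {u v} : diverge u v -> diverge v u.
Proof. by move=> [u' [v' [sib hu hv]]]; exists v', u'; split=> //; apply: siblings_sym. Qed.

Lemma same_depth_diverge {n u v} :
  depth u = n -> depth v = n -> u <> v -> diverge u v.
Proof.
elim: n u v => [|n IHn] u v du dv uv.
  by case: uv; rewrite (depth_eq0 du) (depth_eq0 dv).
have ur : u <> r by move=> def_u; move: du; rewrite def_u depth_root.
have vr : v <> r by move=> def_v; move: dv; rewrite def_v depth_root.
have [puv|/eqP puv] := eqVneq (p u) (p v).
  by exists u, v; split; [split | apply: ancestor_refl | apply: ancestor_refl].
have dpu : depth (p u) = n by move: du; rewrite (depth_parent ur) => -[].
have dpv : depth (p v) = n by move: dv; rewrite (depth_parent vr) => -[].
have [u' [v' [sib hu hv]]] := IHn (p u) (p v) dpu dpv puv.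
by exists u', v'; split=> //; apply: ancestor_trans _ (ancestor_parent _).
Qed.

Lemma ancestor_or_diverge u v :
  [\/ ancestor p u v, ancestor p v u | diverge u v].
Proof.
wlog duv : u v / depth v <= depth u.
  move=> hwlog; have [/hwlog|/ltnW/hwlog] := leqP (depth v) (depth u); first by [].
  by case=> [?|?|/diverge_sym ?]; [apply: Or32 | apply: Or31 | apply: Or33].
pose u' := iter (depth u - depth v) p u.
have anc_u' : ancestor p u' u by exists (depth u - depth v).
have [<-|/eqP u'v] := eqVneq u' v; first exact: Or32.
have du' : depth u' = depth v by rewrite depth_iter subKn.
have [u'' [v'' [sib hu hv]]] := same_depth_diverge du' erefl u'v.
by apply: Or33; exists u'', v''; split=> //; apply: ancestor_trans anc_u'.
Qed.

Local Open Scope R_scope.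

Section Coordinate.

Variables (f : T -> R) (t : R).

Fixpoint path_sum n v : R :=
  if n is n'.+1 then f v * t ^ n + path_sum n' (p v) else 0.

Definition coord v := path_sum (depth v) v.

Lemma coord_parent {v} : v <> r -> coord v = f v * t ^ depth v + coord (p v).
Proof. by move=> vr; rewrite /coord (depth_parent vr). Qed.

Hypothesis t_gt0 : 0 < t.
Hypothesis f_gt0 : forall v, 0 < f v.

Lemma coord_parent_lt {v} : v <> r -> coord (p v) < coord v.
Proof.
move=> vr; rewrite (coord_parent vr).
by have := f_gt0 v; have := pow_lt t (depth v) t_gt0; nra.
Qed.

Lemma coord_ancestor_le {a v} : ancestor p a v -> coord a <= coord v.
Proof.
move=> [k <-]; elim: k v => [|k IHk] v; first exact: Rle_refl.
rewrite iterSr; apply: Rle_trans (IHk (p v)) _.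
have [->|/eqP vr] := eqVneq v r; first by rewrite parent_root; apply: Rle_refl.
exact/Rlt_le/coord_parent_lt.
Qed.

Lemma coord_ancestor_lt {a v} : ancestor p a v -> a <> v -> coord a < coord v.
Proof.
move=> [[|k] def_a] av; first by case: av.
have vr : v <> r by move=> def_v; case: av; rewrite -def_a def_v iter_root.
have := coord_parent_lt vr; have : ancestor p a (p v) by exists k; rewrite -iterSr.
by move/coord_ancestor_le; lra.
Qed.

Hypothesis f_small : forall v, (f v + 1) * t <= 1.

(* Passing from v (of depth d + 1) to its parent removes f v * t^(d+1) from the
   coordinate but adds t^d - t^(d+1) >= f v * t^(d+1) to the power. *)
Lemma coord_add_pow_ancestor {a v} :
  ancestor p a v -> coord v + t ^ depth v <= coord a + t ^ depth a.
Proof.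
move=> [k <-]; elim: k v => [|k IHk] v; first exact: Rle_refl.
rewrite iterSr; apply: Rle_trans (IHk (p v)).
have [->|/eqP vr] := eqVneq v r; first by rewrite parent_root; apply: Rle_refl.
rewrite (coord_parent vr) (depth_parent vr) /=.
have := Rmult_le_compat_r _ _ _ (Rlt_le _ _ (pow_lt t (depth (p v)) t_gt0)) (f_small v).
lra.
Qed.

Lemma coord_descendant_lt {a v} : ancestor p a v -> coord v < coord a + t ^ depth a.
Proof.
by move/coord_add_pow_ancestor; have := pow_lt t (depth v) t_gt0; lra.
Qed.

Lemma coord_siblings_lt {u v w w'} :
  siblings u v -> f u + 1 <= f v -> ancestor p u w -> ancestor p v w' ->
  coord w < coord w'.
Proof.
move=> [_ ur vr puv] fuv /coord_descendant_lt hw /coord_ancestor_le hw'.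
have duv : depth u = depth v by rewrite (depth_parent ur) (depth_parent vr) puv.
move: hw hw'; rewrite (coord_parent ur) (coord_parent vr) puv duv.
have := Rmult_le_compat_r _ _ _ (Rlt_le _ _ (pow_lt t (depth v) t_gt0)) fuv.
lra.
Qed.

End Coordinate.

Local Notation N := (INR #|T|).

Definition rank_weight (v : T) := INR (enum_rank v) + 1.
Definition corank_weight (v : T) := N - INR (enum_rank v).
Definition scale := / (N + 1).

Definition embed v : R * R :=
  (coord rank_weight scale v, coord corank_weight scale v).

Lemma rank_lt_card (v : T) : INR (enum_rank v) + 1 <= N.
Proof. by rewrite -S_INR; apply/le_INR/leP/ltn_ord. Qed.

Lemma scale_gt0 : 0 < scale.
Proof. by apply: Rinv_0_lt_compat; have := pos_INR #|T|; lra. Qed.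

Lemma mul_scale_le1 w : w <= N + 1 -> w * scale <= 1.
Proof.
move=> wN; rewrite -(Rinv_r (N + 1)); last by have := pos_INR #|T|; lra.
by apply: Rmult_le_compat_r wN; apply: Rlt_le scale_gt0.
Qed.

Lemma rank_weight_gt0 v : 0 < rank_weight v.
Proof. by rewrite /rank_weight; have := pos_INR (enum_rank v); lra. Qed.

Lemma corank_weight_gt0 v : 0 < corank_weight v.
Proof. by rewrite /corank_weight; have := rank_lt_card v; lra. Qed.

Lemma rank_weight_small v : (rank_weight v + 1) * scale <= 1.
Proof. by apply: mul_scale_le1; rewrite /rank_weight; have := rank_lt_card v; lra. Qed.

Lemma corank_weight_small v : (corank_weight v + 1) * scale <= 1.
Proof.
by apply: mul_scale_le1; rewrite /corank_weight; have := pos_INR (enum_rank v); lra.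
Qed.

Lemma rank_lt_weights (u v : T) : (enum_rank u < enum_rank v)%nat ->
  rank_weight u + 1 <= rank_weight v /\ corank_weight v + 1 <= corank_weight u.
Proof.
move=> /leP/le_INR; rewrite S_INR /rank_weight /corank_weight; lra.
Qed.

Lemma rank_weight_add_corank v : rank_weight v + corank_weight v = N + 1.
Proof. by rewrite /rank_weight /corank_weight; ring. Qed.

Definition northwest (q q' : R * R) := q.1 < q'.1 /\ q'.2 < q.2.

Lemma siblings_northwest {u v w w'} :
  siblings u v -> (enum_rank u < enum_rank v)%nat ->
  ancestor p u w -> ancestor p v w' -> northwest (embed w) (embed w').
Proof.
move=> sib /rank_lt_weights [ruv cvu] hw hw'; split.
  exact: (coord_siblings_lt _ _ scale_gt0 rank_weight_gt0 rank_weight_small sib ruv hw hw').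
have sib' := siblings_sym sib.
exact: (coord_siblings_lt _ _ scale_gt0 corank_weight_gt0 corank_weight_small sib' cvu hw' hw).
Qed.

Lemma diverge_northwest u v :
  diverge u v -> northwest (embed u) (embed v) \/ northwest (embed v) (embed u).
Proof.
move=> [u' [v' [sib hu hv]]].
have [ruv|rvu|eq_rank] := ltngtP (enum_rank u') (enum_rank v').
- by left; apply: siblings_northwest sib ruv hu hv.
- by right; apply: siblings_northwest (siblings_sym sib) rvu hv hu.
- by have [uv _ _ _] := sib; case: uv; apply/enum_rank_inj/val_inj.
Qed.

Lemma embed_ancestor_le {a v} : ancestor p a v ->
  (embed a).1 <= (embed v).1 /\ (embed a).2 <= (embed v).2.
Proof.
move=> hav; split.
  exact: (coord_ancestor_le _ _ scale_gt0 rank_weight_gt0 hav).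
exact: (coord_ancestor_le _ _ scale_gt0 corank_weight_gt0 hav).
Qed.

Lemma embed_ancestor_lt {a v} : ancestor p a v -> a <> v -> (embed a).1 < (embed v).1.
Proof. exact: (coord_ancestor_lt _ _ scale_gt0 rank_weight_gt0). Qed.

Lemma embed_inj : injective embed.
Proof.
move=> u v euv; have [//|/eqP uv] := eqVneq u v; exfalso.
have [huv|hvu|/diverge_northwest] := ancestor_or_diverge u v.
- by have := embed_ancestor_lt huv uv; rewrite euv; lra.
- by have := embed_ancestor_lt hvu (nesym uv); rewrite euv; lra.
- by rewrite /northwest euv; lra.
Qed.

Lemma SW_quadrant_embed l v :
  SW_quadrant (embed l).1 (embed l).2 (embed v) <-> ancestor p v l.
Proof.
split=> [[xvl yvl]|/embed_ancestor_le //].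
have [hvl|hlv|/diverge_northwest] := ancestor_or_diverge v l; first by [].
- have [<-|/eqP lv] := eqVneq l v; first exact: ancestor_refl.
  by have := embed_ancestor_lt hlv lv; lra.
- by rewrite /northwest; lra.
Qed.

Lemma embed_children_antidiagonal v :
  exists c, forall u, child r p u v -> (embed u).1 + (embed u).2 = c.
Proof.
exists ((embed v).1 + (embed v).2 + (N + 1) * scale ^ (depth v).+1).
move=> u [ur <-]; rewrite -(depth_parent ur) /= !(coord_parent _ _ ur).
by rewrite -(rank_weight_add_corank u); ring.
Qed.

End RootedTree.

Theorem lemma4 (T : finType) (r : T) (p : T -> T) :
  rooted_tree r p ->
  exists pi : T -> (R * R),
    injective pi /\
    (forall l : T, leaf r p l ->
       exists a b : R, forall v : T,
         SW_quadrant a b (pi v) <-> ancestor p v l) /\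
    (forall v : T, ((pi r).1 <= (pi v).1)%R /\ ((pi r).2 <= (pi v).2)%R) /\
    (forall v : T, ~ leaf r p v ->
       exists c : R, forall u : T, child r p u v -> ((pi u).1 + (pi u).2 = c)%R).
Proof.
move=> [parent_root reach_root]; exists (embed T r p reach_root).
split; [|split; [|split]].
- exact: embed_inj.
- by move=> l _; do 2!eexists; apply: SW_quadrant_embed.
- by move=> v; apply: embed_ancestor_le.
- by move=> v _; apply: embed_children_antidiagonal.
Qed.
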